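(* In the currency market model #2 described in the context, fix $t\in\mathbb T$ and assume that for every $B\in\mathcal H_t$ with $\mathbb P(B)>0$ there exists $B'\in\mathcal F$, $B'\subset B$, with $\mathbb P(B')>0$ such that on $B'$, for all $i,j,k\le d$, $1+\lambda^{ij}_t\le(1+\lambda^{ik}_t)(1+\lambda^{kj}_t)$ and $\lambda^{ij}_t+\lambda^{ji}_t>0$. Then $N^0_t(F)=\{0\}$.
   Context: Let $T\in\mathbb N$, $\mathbb T=\{0,\dots,T\}$, $d\ge1$, $(\Omega,\mathcal F,\mathbb P)$ a complete probability space and $\mathbb H=(\mathcal H_t)_{t\in\mathbb T}$ a filtration with $\mathcal H_T\subset\mathcal F$. $\mathbb M^d$ denotes real $d\times d$ matrices, $\mathbb M^d_+$ those with nonnegative entries; $L^0(E;\mathcal G)$ denotes $E$-valued $\mathcal G$-measurable random variables; equalities between random variables hold a.s. Let $S=(S_t)_{t\in\mathbb T}$ be an $\mathcal F$-measurable $(0,\infty)^d$-valued process and $\lambda=(\lambda_t)_{t\in\mathbb T}$ an $\mathcal F$-measurable $\mathbb M^d_+$-valued process (neither necessarily $\mathbb H$-adapted); set $\tau^{ij}_t=S^j_t/S^i_t$. For $\rho,\ell\in\mathbb M^d_+$ define $f(\cdot;\rho,\ell):\mathbb M^d\to\mathbb R^d$ by $f^i(a;\rho,\ell)=\sum_{j=1}^d a^{ji}\mathbf 1_{\{a^{ji}>0\}}-a^{ij}\rho^{ij}(1+\ell^{ij})\mathbf 1_{\{a^{ij}>0\}}$, $i\le d$. Set $\mathcal A=\mathbb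 M^d_+$ and $F_t(a)=f(a;\tau_t,\lambda_t)$, $t\in\mathbb T$. Let $N_t(F)=\{F_t(\eta):\eta\in L^0(\mathbb M^d_+;\mathcal H_t)\}$ and $N^0_t(F)=N_t(F)\cap(-N_t(F))$. *)

From HB Require Import structures.
From mathcomp Require Import all_boot all_order all_algebra.
From mathcomp Require Import all_classical all_reals all_analysis.
Set Implicit Arguments. Unset Strict Implicit. Unset Printing Implicit Defensive.
Import Order.TTheory GRing.Theory Num.Theory.
Local Open Scope classical_set_scope.
Local Open Scope ring_scope.

Definition G_measurable_real {dT} {T : measurableType dT} {R : realType}
  (G : set (set T)) (X : T -> R) : Prop :=
  forall B : set R, measurable B -> G (X @^-1` B).

Definition L0_nonneg_mx {dT} {T : measurableType dT} {R : realType} (d : nat)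
  (G : set (set T)) (eta : T -> 'I_d -> 'I_d -> R) : Prop :=
  forall i j : 'I_d, G_measurable_real G (fun w => eta w i j) /\
                     (forall w, 0 <= eta w i j).

Definition fcost {R : realType} (d : nat) (a rho l : 'I_d -> 'I_d -> R)
  : 'I_d -> R :=
  fun i => \sum_(j < d)
     ((if 0 < a j i then a j i else 0)
      - (if 0 < a i j then a i j * rho i j * (1 + l i j) else 0)).

Definition tau {dT} {T : measurableType dT} {R : realType} (d : nat)
  (S : nat -> T -> 'I_d -> R) (t : nat) (w : T) : 'I_d -> 'I_d -> R :=
  fun i j => S t w j / S t w i.

Definition Fmap {dT} {T : measurableType dT} {R : realType} (d : nat)
  (S : nat -> T -> 'I_d -> R) (lam : nat -> T -> 'I_d -> 'I_d -> R)
  (t : nat) (eta : T -> 'I_d -> 'I_d -> R) : T -> 'I_d -> R :=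
  fun w => fcost (eta w) (tau S t w) (lam t w).

(* X \in N_t(F) (random variables identified up to P-a.s. equality) *)
Definition in_N {dT} {T : measurableType dT} {R : realType} (P : probability T R)
  (d : nat) (H : nat -> set (set T)) (S : nat -> T -> 'I_d -> R)
  (lam : nat -> T -> 'I_d -> 'I_d -> R) (t : nat) (X : T -> 'I_d -> R) : Prop :=
  exists eta, L0_nonneg_mx (H t) eta /\
    {ae P, forall w, forall i, X w i = Fmap S lam t eta w i}.

Definition in_N0 {dT} {T : measurableType dT} {R : realType} (P : probability T R)
  (d : nat) (H : nat -> set (set T)) (S : nat -> T -> 'I_d -> R)
  (lam : nat -> T -> 'I_d -> 'I_d -> R) (t : nat) (X : T -> 'I_d -> R) : Prop :=
  in_N P H S lam t X /\ in_N P H S lam t (fun w i => - X w i).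

From HB Require Import structures.
From mathcomp Require Import all_boot all_order all_algebra.
From mathcomp Require Import all_classical all_reals all_analysis.
From mathcomp Require Import ring lra.
Import Order.TTheory GRing.Theory Num.Theory.
Local Open Scope classical_set_scope.
Local Open Scope ring_scope.

(* A nonnegative transfer matrix a with f(a) = 0 (prices s, costs l) is a
   cycle of transfers with no net effect.  Weighting currency i by w_i s_i and
   summing gives sum_ij a_ij s_j (w_j - w_i - w_i l_ij) = 0.  For w = 1 this says
   that a only uses free transfers (l_ij = 0).  By the triangle inequality and
   l_ii > 0, a free transfer i -> j strictly enlarges the set of currencies that
   can be converted for free into the target, so with w_i the size of that set
   every term is nonnegative, hence zero, and a = 0.  If X and -X are both in
   N_t(F), generated by eta1 and eta2, this applies pointwise to eta1 + eta2
   wherever the costs are proper; the H_t-measurable event {eta1_ij <> 0} would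
   otherwise contain such a set of positive probability. *)

Section Fcost.
Context {R : realType} {d : nat}.
Implicit Types (a b rho l : 'I_d -> 'I_d -> R).

Lemma fcost_nonneg a rho l i : (forall i j, 0 <= a i j) ->
  fcost a rho l i = \sum_j (a j i - a i j * rho i j * (1 + l i j)).
Proof.
move=> a_ge0; apply: eq_bigr => j _.
have posif x : 0 <= x -> (if 0 < x then x else 0) = x.
  by rewrite le_eqVlt => /orP[/eqP<- | ->]; rewrite ?ltxx.
rewrite posif //; case: ifP => // /negbT.
by rewrite lt0r a_ge0 andbT negbK => /eqP->; rewrite !mul0r.
Qed.

Lemma fcostD a b rho l i : (forall i j, 0 <= a i j) -> (forall i j, 0 <= b i j) ->
  fcost (fun i j => a i j + b i j) rho l i = fcost a rho l i + fcost b rho l i.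
Proof.
move=> a_ge0 b_ge0; rewrite !fcost_nonneg //; last by move=> *; apply: addr_ge0.
by rewrite -big_split; apply: eq_bigr => j _ /=; ring.
Qed.

Lemma fcost_eq0 a rho l i : (forall i j, a i j = 0) -> fcost a rho l i = 0.
Proof. by move=> a0; apply: big1 => j _; rewrite !a0 ltxx subr0. Qed.

End Fcost.

Lemma psumr2_eq0 {R : numDomainType} {d : nat} {f : 'I_d -> 'I_d -> R} :
  (forall i j, 0 <= f i j) -> \sum_i \sum_j f i j = 0 -> forall i j, f i j = 0.
Proof.
move=> f_ge0 sum0 i j.
have row_ge0 k : 0 <= \sum_j f k j by apply: sumr_ge0 => j' _.
have /(psumr_eq0P (fun k _ => row_ge0 k)) row0 := sum0.
by move/(psumr_eq0P (fun k _ => f_ge0 i k)): (row0 i isT); apply.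
Qed.

Section ZeroCostTransfers.
Context {R : realType} {d : nat} {l : 'I_d -> 'I_d -> R} {s : 'I_d -> R}.
Hypothesis l_ge0 : forall i j, 0 <= l i j.
Hypothesis l_tri : forall i j k, 1 + l i j <= (1 + l i k) * (1 + l k j).
Hypothesis l_pos : forall i j, 0 < l i j + l j i.
Hypothesis s_gt0 : forall i, 0 < s i.

Definition free_sources (i : 'I_d) : nat := #|[set k | l k i == 0]%SET|.

Lemma free_sources_lt {i j} : l i j = 0 -> (free_sources i < free_sources j)%N.
Proof.
move=> lij; apply: proper_card; rewrite properE; apply/andP; split.
  apply/fintype.subsetP => k; rewrite !inE => /eqP lki; apply/eqP.
  by have := l_tri k j i; have := l_ge0 k j; rewrite lki lij; lra.
apply/fintype.subsetPn; exists i; rewrite !inE ?lij ?eqxx //.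
by have := l_pos i i; lra.
Qed.

Context {a : 'I_d -> 'I_d -> R}.
Hypothesis a_ge0 : forall i j, 0 <= a i j.
Hypothesis a_balanced : forall i, fcost a (fun i j => s j / s i) l i = 0.

Lemma balanced_weighted_sum (w : 'I_d -> R) :
  \sum_i \sum_j a i j * s j * (w j - w i - w i * l i j) = 0.
Proof.
have expand i : w i * s i * fcost a (fun i j => s j / s i) l i =
    \sum_j (w i * s i * a j i - w i * a i j * s j * (1 + l i j)).
  rewrite fcost_nonneg // mulr_sumr; apply: eq_bigr => j _.
  by field; exact: lt0r_neq0.
transitivity (\sum_i \sum_j (w i * s i * a j i - w i * a i j * s j * (1 + l i j))).
  2: by rewrite big1 // => i _; rewrite -expand a_balanced mulr0.
symmetry; under eq_bigr do rewrite sumrB.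
rewrite sumrB exchange_big /= -sumrB; apply: eq_bigr => i _.
by rewrite -sumrB; apply: eq_bigr => j _; ring.
Qed.

Lemma balanced_free_transfers i j : a i j * l i j = 0.
Proof.
have := balanced_weighted_sum (fun=> 1).
under eq_bigr do under eq_bigr do rewrite subrr mul1r sub0r mulrN.
under eq_bigr do rewrite sumrN; rewrite sumrN.
move=> /eqP; rewrite oppr_eq0 => /eqP /psumr2_eq0 sum0.
have /eqP := sum0 (fun i j => mulr_ge0 (mulr_ge0 (a_ge0 i j) (ltW (s_gt0 j))) (l_ge0 i j)) i j.
by rewrite mulrAC mulf_eq0 (gt_eqF (s_gt0 j)) orbF => /eqP.
Qed.

Lemma balanced_eq0 i j : a i j = 0.
Proof.
pose c i : R := (free_sources i)%:R.
have term_ge0 i' j' : 0 <= a i' j' * s j' * (c j' - c i' - c i' * l i' j').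
  have /eqP := balanced_free_transfers i' j'; rewrite mulf_eq0 => /orP[/eqP-> | /eqP lij].
    by rewrite !mul0r.
  rewrite lij mulr0 subr0 mulr_ge0 ?mulr_ge0 ?(ltW (s_gt0 j')) // subr_ge0 ler_nat.
  exact/ltnW/free_sources_lt.
have /eqP := psumr2_eq0 term_ge0 (balanced_weighted_sum c) i j.
have /eqP := balanced_free_transfers i j; rewrite !mulf_eq0 (gt_eqF (s_gt0 j)) orbF.
case/orP=> [/eqP // | /eqP lij]; rewrite lij mulr0 subr0 subr_eq0 eqr_nat.
by rewrite (gtn_eqF (free_sources_lt lij)) orbF => /eqP.
Qed.

End ZeroCostTransfers.

Definition proper_costs {R : realType} {d : nat} (l : 'I_d -> 'I_d -> R) : Prop :=
  forall i j k : 'I_d, 1 + l i j <= (1 + l i k) * (1 + l k j) /\ 0 < l i j + l j i.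

Lemma fcost_opposite_eq0 {R : realType} {d : nat} {a b l : 'I_d -> 'I_d -> R}
    {s : 'I_d -> R} :
  (forall i j, 0 <= a i j) -> (forall i j, 0 <= b i j) ->
  (forall i j, 0 <= l i j) -> proper_costs l -> (forall i, 0 < s i) ->
  (forall i, fcost a (fun i j => s j / s i) l i + fcost b (fun i j => s j / s i) l i = 0) ->
  forall i j, a i j = 0.
Proof.
move=> a_ge0 b_ge0 l_ge0 l_proper s_gt0 ab0 i j.
have ab_ge0 i' j' : 0 <= a i' j' + b i' j' by apply: addr_ge0.
have ab_balanced i' :
    fcost (fun i j => a i j + b i j) (fun i j => s j / s i) l i' = 0.
  by rewrite fcostD.
have /eqP := balanced_eq0 l_ge0 (fun i j k => (l_proper i j k).1)
  (fun i j => (l_proper i j i).2) s_gt0 ab_ge0 ab_balanced i j.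
by rewrite paddr_eq0 // => /andP[/eqP].
Qed.

Section AlmostSure.
Context {dT : measure_display} {T : measurableType dT} {R : realType}.
Variable mu : {measure set T -> \bar R}.

Lemma ae_witness {B : set T} {Q : T -> Prop} : measurable B -> (0 < mu B)%E ->
  {ae mu, forall w, Q w} -> exists w, B w /\ Q w.
Proof.
move=> mB muB_gt0 [N [mN muN0 notQ_N]]; apply: contrapT => noW.
have B_N : B `<=` N by move=> w Bw; apply: notQ_N => Qw; apply: noW; exists w.
have := le_measure mu (mem_set mB) (mem_set mN) B_N.
by move: muN0 => /= ->; rewrite leNgt muB_gt0.
Qed.

Lemma ae_eq0_on_good (G : set (set T)) (good : set T) (f : T -> R) :
  G `<=` measurable -> G_measurable_real G f ->
  (forall B, G B -> (0 < mu B)%E ->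
     exists B', [/\ measurable B', B' `<=` B, (0 < mu B')%E & forall w, B' w -> good w]) ->
  {ae mu, forall w, good w -> f w = 0} -> {ae mu, forall w, f w = 0}.
Proof.
move=> G_meas fG local f_good.
pose A := f @^-1` ~` [set 0].
have GA : G A by apply: fG; apply: measurableC; apply: measurable_set1.
exists A; split; [exact: G_meas | | by move=> w /= fw0].
apply/eqP; rewrite eq_le measure_ge0 andbT leNgt; apply/negP => muA_gt0.
have [B' [mB' B'A muB'_gt0 B'good]] := local A GA muA_gt0.
have [w [B'w f_good_w]] := ae_witness mB' muB'_gt0 f_good.
exact: B'A w B'w (f_good_w (B'good w B'w)).
Qed.

End AlmostSure.

Lemma G_measurable_real_cst {dT} {T : measurableType dT} {R : realType}
    (G : set (set T)) (c : R) :
  sigma_algebra setT G -> G_measurable_real G (fun=> c).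
Proof.
move=> [G0 GC _] B _; rewrite preimage_cst; case: ifP => // _.
by rewrite -(setD0 setT); apply: GC.
Qed.

Section NullSpace.
Context {dT : measure_display} {T : measurableType dT} {R : realType}.
Variables (P : probability T R) (d : nat) (H : nat -> set (set T)).
Variables (S : nat -> T -> 'I_d -> R) (lam : nat -> T -> 'I_d -> 'I_d -> R) (t : nat).

Lemma in_N0_ae_eq0 (X : T -> 'I_d -> R) :
  H t `<=` measurable -> (forall w i, 0 < S t w i) -> (forall w i j, 0 <= lam t w i j) ->
  (forall B, H t B -> (0 < P B)%E ->
     exists B', [/\ measurable B', B' `<=` B, (0 < P B')%E &
       forall w, B' w -> proper_costs (lam t w)]) ->
  in_N0 P H S lam t X -> {ae P, forall w i, X w i = 0}.
Proof.
move=> Ht_meas S_gt0 lam_ge0 local [[e1 [e1_L0 X_e1]] [e2 [e2_L0 X_e2]]].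
have e1_ae0 i j : {ae P, forall w, e1 w i j = 0}.
  apply: (ae_eq0_on_good P _ _ _ Ht_meas (e1_L0 i j).1 local).
  apply: filterS2 X_e1 X_e2 => w X_e1w X_e2w proper_w.
  apply: (fcost_opposite_eq0 _ _ (lam_ge0 w) proper_w (S_gt0 w)) => [i' j'|i' j'|i'].
  - exact: (e1_L0 i' j').2.
  - exact: (e2_L0 i' j').2.
  by move: (X_e1w i') (X_e2w i'); rewrite /Fmap /tau => <- <-; rewrite subrr.
have e1_ae_all0 : {ae P, forall w i j, e1 w i j = 0}.
  by apply: filter_forall => i; apply: filter_forall => j; exact: e1_ae0.
apply: filterS2 X_e1 e1_ae_all0 => w X_e1w e1w0 i.
by rewrite X_e1w /Fmap fcost_eq0.
Qed.

Lemma ae_eq0_in_N0 (X : T -> 'I_d -> R) : sigma_algebra setT (H t) ->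
  {ae P, forall w i, X w i = 0} -> in_N0 P H S lam t X.
Proof.
move=> Ht_sigma X0; have L0_zero : L0_nonneg_mx (H t) (fun _ _ _ => 0 : R).
  by move=> i j; split=> //; apply: G_measurable_real_cst.
split; exists (fun _ _ _ => 0); split=> //; apply: filterS X0 => w Xw0 i.
  by rewrite Xw0 /Fmap fcost_eq0.
by rewrite Xw0 oppr0 /Fmap fcost_eq0.
Qed.

End NullSpace.

Theorem mainTheorem10 (R : realType) (dT : measure_display) (T : measurableType dT)
  (P : probability T R) (Tn d : nat) (H : nat -> set (set T))
  (S : nat -> T -> 'I_d -> R) (lam : nat -> T -> 'I_d -> 'I_d -> R) (t : nat) :
  (0 < d)%N ->
  measure_is_complete P ->
  (forall s, (s <= Tn)%N -> sigma_algebra setT (H s)) ->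
  (forall s u, (s <= u)%N -> (u <= Tn)%N -> H s `<=` H u) ->
  H Tn `<=` measurable ->
  (forall s i, (s <= Tn)%N -> measurable_fun setT (fun w => S s w i)) ->
  (forall s w i, (s <= Tn)%N -> 0 < S s w i) ->
  (forall s i j, (s <= Tn)%N -> measurable_fun setT (fun w => lam s w i j)) ->
  (forall s w i j, (s <= Tn)%N -> 0 <= lam s w i j) ->
  (t <= Tn)%N ->
  (forall B, H t B -> (0 < P B)%E ->
     exists B', [/\ measurable B', B' `<=` B, (0 < P B')%E &
       forall w, B' w -> forall i j k : 'I_d,
         1 + lam t w i j <= (1 + lam t w i k) * (1 + lam t w k j) /\
         0 < lam t w i j + lam t w j i]) ->
  forall X : T -> 'I_d -> R,
    in_N0 P H S lam t X <-> {ae P, forall w, forall i, X w i = 0}.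
Proof.
move=> _ _ H_sigma H_mono HTn_meas _ S_gt0 _ lam_ge0 t_le local X; split.
- apply: in_N0_ae_eq0 => // [B HtB | w i | w i j].
  + exact/HTn_meas/(H_mono _ _ t_le (leqnn Tn)).
  + exact: S_gt0.
  + exact: lam_ge0.
- exact: ae_eq0_in_N0 (H_sigma t t_le).
Qed.
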